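(* Let $\varphi$ be an almost identity PC-map of $\mathrm{UT}(n,F)$ and let $k$ be a positive integer with $k\le n-3$. If condition $X_k$ holds for $\varphi$, then condition $Y_k$ holds for $\varphi$.
   Context: $F$ is a field and $n\in\mathbb N\cup\{\infty\}$. $\mathrm{UT}(n,F)$ is the group of upper unitriangular $n\times n$ matrices over $F$ (for $n=\infty$: all $\mathbb N\times\mathbb N$ matrices with $1$ on the diagonal and $0$ below it). Convention: $\infty+m=\infty$ for $m\in\mathbb Z$. $e$ is the identity matrix, $e_{ij}$ the matrix unit, $t_{ij}(\alpha)=e+\alpha e_{ij}$ ($i<j$). $[x,y]=xyx^{-1}y^{-1}$. A PC-map is a bijection $\varphi$ of the group with $\varphi([x,y])=[\varphi(x),\varphi(y)]$ for all $x,y$; it is almost identity if $\varphi(t_{ij}(\alpha))=t_{ij}(\alpha)$ for all $i<j$, $\alpha\in F$. $C$ denotes the center of $\mathrm{UT}(n,F)$ (trivial if $n=\infty$, equal to $\{t_{1n}(\alpha):\alpha\in F\}$ if $n$ is finite). Conditions: $X_k$ ($k\le n-2$): $\varphi(a)_{1i}=a_{1i}$ for all $a\in\mathrm{UT}(n,F)$ and all $i=2,\dots,k$. $Y_k$ ($k\le n-3$): for all $\beta,\alpha_1,\dots,\alpha_{k-1}\in F$, the matrix $y=t_{k+1\,k+2}(\beta)\prod_{i=1}^{k-1}t_{ik}(\alpha_i)$ satisfies $\varphi(y)\in yC$. *)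

From HB Require Import structures.
From mathcomp Require Import all_boot all_order all_algebra.
Set Implicit Arguments. Unset Strict Implicit. Unset Printing Implicit Defensive.
Import GRing.Theory.
Local Open Scope ring_scope.

(* n in N ∪ {∞}: [Some m] is the finite size m, [None] is ∞.
   Matrices are functions nat -> nat -> F with 1-based indices as in the paper;
   index i is valid iff 1 <= i (<= m when n = Some m). *)
Definition dimN := option nat.

Definition inrng (n : dimN) (i : nat) : bool :=
  (0 < i)%N && (if n is Some m then (i <= m)%N else true).

Definition rmx (F : Type) := nat -> nat -> F.

Definition UT (F : fieldType) (n : dimN) (a : rmx F) : Prop :=
  (forall i, inrng n i -> a i i = 1) /\
  (forall i j, ~~ [&& inrng n i, inrng n j & (i <= j)%N] -> a i j = 0).

Definition idm (F : fieldType) (n : dimN) : rmx F :=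
  fun i j => if [&& inrng n i, inrng n j & i == j] then 1 else 0.
Arguments idm {F} n _ _.

(* matrix product (finite sums since matrices are upper triangular) *)
Definition mxmul (F : fieldType) (n : dimN) (a b : rmx F) : rmx F :=
  fun i j => if [&& inrng n i, inrng n j & (i <= j)%N]
             then \sum_(i <= k < j.+1) a i k * b k j else 0.

(* m-th power of N = a - e, entry (i,j) *)
Fixpoint npow (F : fieldType) (a : rmx F) (m : nat) (i j : nat) : F :=
  match m with
  | 0 => (i == j)%:R
  | m'.+1 => \sum_(i <= k < j.+1) (a i k - (i == k)%:R) * npow a m' k j
  end.

(* inverse of a unitriangular matrix: (e + N)^{-1} = sum_m (-N)^m *)
Definition mxinv (F : fieldType) (n : dimN) (a : rmx F) : rmx F :=
  fun i j => if [&& inrng n i, inrng n j & (i <= j)%N]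
             then \sum_(m < (j - i).+1) (-1) ^+ m * npow a m i j else 0.

Definition comm (F : fieldType) (n : dimN) (x y : rmx F) : rmx F :=
  mxmul n (mxmul n (mxmul n x y) (mxinv n x)) (mxinv n y).

Definition tij (F : fieldType) (n : dimN) (i j : nat) (alpha : F) : rmx F :=
  fun p q => idm n p q + (if (p == i) && (q == j) then alpha else 0).
Arguments tij {F} n i j alpha _ _.

Definition PCmap (F : fieldType) (n : dimN) (phi : rmx F -> rmx F) : Prop :=
  [/\ (forall a, UT n a -> UT n (phi a)),
      (forall a b, UT n a -> UT n b -> phi a = phi b -> a = b),
      (forall b, UT n b -> exists2 a, UT n a & phi a = b) &
      (forall x y, UT n x -> UT n y -> phi (comm n x y) = comm n (phi x) (phi y))].

Definition almost_identity (F : fieldType) (n : dimN) (phi : rmx F -> rmx F) : Prop :=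
  forall (i j : nat) (alpha : F), inrng n i -> inrng n j -> (i < j)%N ->
    phi (tij n i j alpha) = tij n i j alpha.

Definition in_center (F : fieldType) (n : dimN) (c : rmx F) : Prop :=
  UT n c /\ forall x, UT n x -> mxmul n c x = mxmul n x c.

Definition condX (F : fieldType) (n : dimN) (phi : rmx F -> rmx F) (k : nat) : Prop :=
  forall a, UT n a -> forall i, (2 <= i <= k)%N -> phi a 1%N i = a 1%N i.

Definition ymat (F : fieldType) (n : dimN) (k : nat) (beta : F) (alpha : nat -> F) : rmx F :=
  mxmul n (tij n k.+1 k.+2 beta)
    (foldr (fun i acc => mxmul n (tij n i k (alpha i)) acc) (idm n) (iota 1 k.-1)).

Definition condY (F : fieldType) (n : dimN) (phi : rmx F -> rmx F) (k : nat) : Prop :=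
  forall (beta : F) (alpha : nat -> F),
    exists2 c, in_center n c & phi (ymat n k beta alpha) = mxmul n (ymat n k beta alpha) c.

(* Let y be the matrix of Y_k and z := phi y.  Every row i > 1 of y is e_i plus
   d times a unit row m > 1, and this is equivalent to the commutator identity
   [t_{1i}(1), y] = t_{1m}(d).  For k < j, y satisfies [y, t_{j,j+1}(1)] =
   t_{k+1,j+1}(g), and any matrix satisfying such an identity has a zero (1,j)
   entry.  Since phi fixes transvections and preserves commutators, z satisfies
   the same identities, so it agrees with y on every row below the first and at
   (1,j) for k < j < n.  Condition X_k handles (1,j) for 2 <= j <= k, so z and
   y can only differ in the corner (1,n), i.e. z lies in yC. *)

From HB Require Import structures.
From mathcomp Require Import all_boot all_order all_algebra.
From mathcomp Require Import zify ring.
From Stdlib Require Import FunctionalExtensionality.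
Set Implicit Arguments. Unset Strict Implicit. Unset Printing Implicit Defensive.
Import GRing.Theory.
Local Open Scope ring_scope.

Lemma mxext (F : Type) (a b : rmx F) : (forall i j, a i j = b i j) -> a = b.
Proof. by move=> eq_ab; do 2 apply: functional_extensionality => ?; apply: eq_ab. Qed.

Lemma exchange_big_nat_triangle (F : fieldType) (i j : nat) (f : nat -> nat -> F) :
  \sum_(i <= l < j.+1) \sum_(i <= s < l.+1) f s l =
  \sum_(i <= s < j.+1) \sum_(s <= l < j.+1) f s l.
Proof.
elim: j => [|j IH]; first by case: i => [|i]; rewrite ?big_nat1 // !big_geq.
case: (leqP i j.+1) => hij; last by rewrite !big_geq.
rewrite big_nat_recr //= IH.
transitivity (\sum_(i <= s < j.+2) (\sum_(s <= l < j.+1) f s l + f s j.+1)).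
  rewrite big_split /= [X in _ = X + _]big_nat_recr //= [X in _ = _ + X + _]big_geq //.
  by rewrite addr0.
by apply: eq_big_nat => s /andP [_ hs]; rewrite [RHS]big_nat_recr.
Qed.

Section Unitriangular.

Variables (F : fieldType) (n : dimN).
Implicit Types (w : rmx F) (g : F).

Lemma inrng_between i j l : inrng n i -> inrng n j -> (i <= l <= j)%N -> inrng n l.
Proof. rewrite /inrng; case: n => [m|] /=; rewrite ?andbT; lia. Qed.

Lemma inrng_leq j l : inrng n j -> (0 < l <= j)%N -> inrng n l.
Proof. rewrite /inrng; case: n => [m|] /=; rewrite ?andbT; lia. Qed.

Lemma UT_diag w i : UT n w -> inrng n i -> w i i = 1.
Proof. by case=> + _; apply. Qed.

Lemma UT_zero w i j : UT n w -> ~~ [&& inrng n i, inrng n j & (i <= j)%N] -> w i j = 0.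
Proof. by case=> _; apply. Qed.

Lemma UT_col1 w i : UT n w -> inrng n 1%N -> w i 1%N = (i == 1%N)%:R.
Proof.
move=> Uw n1; case: (eqVneq i 1%N) => [->|i_neq1]; first exact: UT_diag.
by rewrite (UT_zero Uw) //; apply/negP => /and3P [/andP [? _] _ ?]; lia.
Qed.

Lemma idm_rowE i j : inrng n i -> idm n i j = (i == j)%:R :> F.
Proof. by rewrite /idm => ni; rewrite ni; case: eqP => [<-|]; rewrite ?ni ?andbF. Qed.

Lemma idm_colE i j : inrng n j -> idm n i j = (i == j)%:R :> F.
Proof. by rewrite /idm => nj; case: eqP => [->|]; rewrite ?nj ?andbF. Qed.

Lemma UT_idm : UT n (idm n : rmx F).
Proof.
split=> [i ni|i j]; first by rewrite idm_rowE // eqxx.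
by rewrite /idm; case: ifP => // /and3P [-> -> /eqP ->]; rewrite leqnn.
Qed.

Lemma UT_mxmul (a b : rmx F) : UT n a -> UT n b -> UT n (mxmul n a b).
Proof.
move=> Ua Ub; split=> [i ni|i j ij_out]; last by rewrite /mxmul (negbTE ij_out).
by rewrite /mxmul ni leqnn big_nat1 (UT_diag Ua ni) (UT_diag Ub ni) mulr1.
Qed.

Lemma mxmulA (a b c : rmx F) : mxmul n (mxmul n a b) c = mxmul n a (mxmul n b c).
Proof.
apply: mxext => i j; rewrite /mxmul; case: ifP => // /and3P [ni nj le_ij].
transitivity (\sum_(i <= l < j.+1) \sum_(i <= s < l.+1) a i s * b s l * c l j).
  apply: eq_big_nat => l /andP [il lj].
  by rewrite ni (@inrng_between i j l) // ?il /= ?mulr_suml //; lia.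
rewrite exchange_big_nat_triangle; apply: eq_big_nat => s /andP [le_is le_sj].
rewrite (@inrng_between i j s) ?nj /=; try lia.
rewrite (_ : (s <= j)%N = true); last lia.
by rewrite mulr_sumr; apply: eq_bigr => l _; rewrite mulrA.
Qed.

Lemma idm_mxmul w : UT n w -> mxmul n (idm n) w = w.
Proof.
move=> Uw; apply: mxext => i j; rewrite /mxmul; case: ifP => ij_in; last first.
  by rewrite (UT_zero Uw) // ij_in.
case/and3P: ij_in => ni nj le_ij.
rewrite big_ltn //= idm_rowE // eqxx mul1r big_nat_cond big1 ?addr0 // => l.
by case/andP=> /andP [il _] _; rewrite idm_rowE // (_ : (i == l) = false) ?mul0r //; lia.
Qed.

Lemma mxmul_idm w : UT n w -> mxmul n w (idm n) = w.
Proof.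
move=> Uw; apply: mxext => i j; rewrite /mxmul; case: ifP => ij_in; last first.
  by rewrite (UT_zero Uw) // ij_in.
case/and3P: ij_in => ni nj le_ij.
rewrite big_nat_recr //= idm_rowE // eqxx mulr1 big_nat_cond big1 ?add0r // => l.
case/andP=> /andP [il lj] _; rewrite idm_rowE; last by apply: (inrng_between ni nj); lia.
by rewrite (_ : (l == j) = false) ?mulr0 //; lia.
Qed.

Lemma UT_tij p q g : inrng n p -> inrng n q -> (p < q)%N -> UT n (tij n p q g).
Proof.
move=> np nq lt_pq; split=> [i ni|i j ij_out]; rewrite /tij.
  rewrite idm_rowE // eqxx; case: (eqVneq i p) => [ip|]; rewrite ?addr0 //.
  by case: (eqVneq i q) => [iq|]; rewrite /= ?addr0 //; move: lt_pq; rewrite -ip iq ltnn.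
rewrite /idm; case: ifP => [/and3P [ni _ /eqP ij]|_].
  by move: ij_out; rewrite -ij ni leqnn.
case: ifP; rewrite ?add0r // => /andP [/eqP ip /eqP jq].
by move: ij_out; rewrite ip jq np nq ltnW.
Qed.

Lemma mxmul_tijl p q g w i j : UT n w -> inrng n p -> inrng n q -> (p < q)%N ->
  mxmul n (tij n p q g) w i j = w i j + (if i == p then g * w q j else 0).
Proof.
move=> Uw np nq lt_pq; rewrite /mxmul; case: ifP => ij_in; last first.
  rewrite (UT_zero Uw) ?ij_in // add0r; case: eqP => // ip.
  rewrite (UT_zero Uw) ?mulr0 //; apply/negP => /and3P [_ nj qj].
  by move: ij_in; rewrite ip np nj (leq_trans (ltnW lt_pq) qj).
case/and3P: ij_in => ni nj le_ij.
rewrite /tij; under eq_bigr do rewrite mulrDl.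
rewrite big_split /=; congr (_ + _).
  by have := congr1 (fun f => f i j) (idm_mxmul Uw); rewrite /mxmul ni nj le_ij.
case: eqP => ip; last by rewrite big1 // => l _; rewrite mul0r.
rewrite (eq_bigr (fun l => if l == q then g * w q j else 0)); last first.
  by move=> l _ /=; case: eqP => [->|]; rewrite ?mul0r.
rewrite -big_mkcond big_nat1_eq; case: ifP => // /negbT q_out.
by rewrite (UT_zero Uw) ?mulr0 //; apply/negP => /and3P [_ _ qj]; move: q_out; lia.
Qed.

Lemma mxmul_tijr p q g w i j : UT n w -> inrng n p -> inrng n q -> (p < q)%N ->
  mxmul n w (tij n p q g) i j = w i j + (if j == q then g * w i p else 0).
Proof.
move=> Uw np nq lt_pq; rewrite /mxmul; case: ifP => ij_in; last first.
  rewrite (UT_zero Uw) ?ij_in // add0r; case: eqP => // jq.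
  rewrite (UT_zero Uw) ?mulr0 //; apply/negP => /and3P [ni _ ip].
  by move: ij_in; rewrite jq ni nq (leq_trans ip (ltnW lt_pq)).
case/and3P: ij_in => ni nj le_ij.
rewrite /tij; under eq_bigr do rewrite mulrDr.
rewrite big_split /=; congr (_ + _).
  by have := congr1 (fun f => f i j) (mxmul_idm Uw); rewrite /mxmul ni nj le_ij.
case: (eqVneq j q) => jq; last by rewrite big1 // => l _; rewrite andbF mulr0.
rewrite (eq_bigr (fun l => if l == p then g * w i p else 0)); last first.
  by move=> l _; rewrite ?eqxx ?andbT; case: eqP => [->|]; rewrite ?mulr0 // mulrC.
rewrite -big_mkcond big_nat1_eq; case: ifP => // /negbT p_out.
by rewrite (UT_zero Uw) ?mulr0 //; apply/negP => /and3P [_ _ ip]; move: p_out; lia.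
Qed.

Lemma npow_eq0 (a : rmx F) m l j : UT n a -> inrng n l -> inrng n j -> (j < l + m)%N ->
  npow a m l j = 0.
Proof.
move=> Ua; elim: m l => [|m IH] l nl nj lt_jlm /=.
  by rewrite (_ : (l == j) = false) //; lia.
case: (ltnP j l) => le_lj; first by rewrite big_geq.
rewrite big_ltn ?ltnS //= (UT_diag Ua nl) eqxx subrr mul0r add0r.
rewrite big_nat_cond big1 // => s /andP [/andP [ls sj] _].
by rewrite IH ?mulr0 //; [apply: (inrng_between nl nj) | ]; lia.
Qed.

Lemma mxmul_inv (a : rmx F) : UT n a -> mxmul n a (mxinv n a) = idm n.
Proof.
move=> Ua; apply: mxext => i j; rewrite /mxmul; case: ifP => ij_in; last first.
  by rewrite /idm; case: ifP => // /and3P [ni _ /eqP ij]; move: ij_in; rewrite -ij ni leqnn.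
case/and3P: ij_in => ni nj le_ij.
pose P m := npow a m i j.
transitivity (\sum_(i <= l < j.+1)
               a i l * \sum_(0 <= m < (j - i).+1) (-1) ^+ m * npow a m l j).
  apply: eq_big_nat => l /andP [il lj].
  have nl : inrng n l by apply: (inrng_between ni nj); lia.
  rewrite /mxinv nl nj (_ : (l <= j)%N = true) /=; last lia.
  congr (_ * _); rewrite [RHS](big_cat_nat _ (n := (j - l).+1)) //=; last by rewrite ltnS leq_sub2l.
  rewrite big_mkord [X in _ = _ + X]big_nat_cond [X in _ = _ + X]big1 ?addr0 // => m /andP [/andP [lm _] _].
  by rewrite (npow_eq0 Ua nl nj) ?mulr0 //; lia.
(* Expanding [npow a m.+1] along its first row, the sum telescopes. *)
transitivity (\sum_(0 <= m < (j - i).+1) (-1) ^+ m * (P m.+1 + P m)).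
  under eq_bigr do rewrite mulr_sumr.
  rewrite exchange_big /=; apply: eq_bigr => m _; rewrite /P /=.
  under eq_bigr do rewrite mulrCA.
  rewrite -mulr_sumr; congr (_ * _).
  have diag_term : \sum_(i <= l < j.+1) (i == l)%:R * npow a m l j = npow a m i j.
    rewrite big_ltn ?ltnS //= eqxx mul1r big_nat_cond big1 ?addr0 // => l.
    by case/andP=> /andP [il _] _; rewrite (_ : (i == l) = false) ?mul0r //; lia.
  by rewrite -diag_term -big_split; apply: eq_bigr => l _ /=; rewrite -mulrDl subrK.
rewrite (@telescope_sumr_eq _ _ _ (fun m => - ((-1) ^+ m * P m))) //; last first.
  by move=> m _; rewrite exprS; ring.
rewrite /P (@npow_eq0 _ (j - i).+1) // ?mulr0; last lia.
by rewrite oppr0 sub0r opprK expr0 mul1r idm_rowE.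
Qed.


Lemma UT_mxinv (a : rmx F) : UT n a -> UT n (mxinv n a).
Proof.
move=> Ua; split=> [i ni|i j ij_out]; rewrite /mxinv; last by rewrite (negbTE ij_out).
by rewrite ni leqnn subnn big_ord1 expr0 mul1r /= eqxx.
Qed.

Lemma mxinv_mul (a : rmx F) : UT n a -> mxmul n (mxinv n a) a = idm n.
Proof.
move=> Ua; set b := mxinv n a; set c := mxinv n b.
have Ub : UT n b by apply: UT_mxinv.
have Uc : UT n c by apply: UT_mxinv.
have -> : mxmul n b a = mxmul n (mxmul n b a) (mxmul n b c).
  by rewrite mxmul_inv // mxmul_idm //; apply: UT_mxmul.
rewrite !mxmulA -[mxmul n a (mxmul n b c)]mxmulA mxmul_inv // idm_mxmul //.
exact: mxmul_inv.
Qed.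

Lemma commE (a b c : rmx F) : UT n a -> UT n b -> UT n c ->
  comm n a b = c <-> mxmul n a b = mxmul n (mxmul n c b) a.
Proof.
move=> Ua Ub Uc; rewrite /comm; split=> [<-|->].
  have Uaba : UT n (mxmul n (mxmul n a b) (mxinv n a)).
    by apply: UT_mxmul; [apply: UT_mxmul | apply: UT_mxinv].
  rewrite [mxmul n (mxmul n _ (mxinv n b)) b]mxmulA mxinv_mul // mxmul_idm //.
  by rewrite mxmulA mxinv_mul // mxmul_idm //; apply: UT_mxmul.
rewrite [mxmul n (mxmul n (mxmul n c b) a) _]mxmulA mxmul_inv // mxmul_idm; last by apply: UT_mxmul.
by rewrite mxmulA mxmul_inv // mxmul_idm.
Qed.

Lemma comm_t1_rowE w i m d : UT n w -> inrng n i -> inrng n m -> (1 < i)%N -> (1 < m)%N ->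
  comm n (tij n 1%N i 1) w = tij n 1%N m d <-> forall b : nat, w i b = (i == b)%:R + d * w m b.
Proof.
move=> Uw ni nm lt1i lt1m.
have n1 : inrng n 1%N by apply: (inrng_leq ni); lia.
have Ut1i : UT n (tij n 1%N i (1 : F)) by apply: UT_tij.
have Ut1m : UT n (tij n 1%N m d) by apply: UT_tij.
have Uwt : UT n (mxmul n w (tij n 1%N i (1 : F))) by apply: UT_mxmul.
rewrite commE //.
have lhsE a b : mxmul n (tij n 1%N i 1) w a b = w a b + (if a == 1%N then w i b else 0).
  by rewrite mxmul_tijl // mul1r.
have rhsE a b : mxmul n (mxmul n (tij n 1%N m d) w) (tij n 1%N i 1) a b =
    w a b + (if b == i then (a == 1%N)%:R else 0) + (if a == 1%N then d * w m b else 0).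
  rewrite mxmulA mxmul_tijl // !mxmul_tijr // !(UT_col1 _ Uw n1) mul1r.
  by rewrite (_ : (m == 1%N) = false); [case: (b == i); rewrite ?mulr0 ?addr0 | lia].
split=> [/(congr1 (fun f => f 1%N)) row1 b | rowi].
  have := congr1 (fun f => f b) row1; rewrite /= lhsE rhsE eqxx -addrA => /addrI ->.
  by rewrite [i == b]eq_sym; case: (b == i).
apply: mxext => a b; rewrite lhsE rhsE.
case: (eqVneq a 1%N) => [->|_]; last by case: (b == i); rewrite /= !addr0.
by rewrite rowi [i == b]eq_sym; case: (b == i); rewrite /= ?addr0 ?add0r; ring.
Qed.

Lemma comm_tijS_row1 w j p g : UT n w -> inrng n j.+1 -> inrng n p -> (1 < p <= j)%N ->
  comm n w (tij n j j.+1 1) = tij n p j.+1 g -> w 1%N j = 0.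
Proof.
move=> Uw nj1 np /andP [lt1p le_pj].
have nj : inrng n j by apply: (inrng_leq nj1); lia.
have ltjS := ltnSn j.
have Ut : UT n (tij n j j.+1 (1 : F)) by apply: UT_tij.
have Utp : UT n (tij n p j.+1 g) by apply: UT_tij => //; lia.
have Utw : UT n (mxmul n (tij n j j.+1 1) w) by apply: UT_mxmul.
rewrite commE //; move/(congr1 (fun f => f 1%N j.+1)).
rewrite /= mxmul_tijr // eqxx mul1r mxmulA mxmul_tijl //.
rewrite mxmul_tijl // (_ : (1 == p)%N = false); last lia.
rewrite (_ : (1 == j)%N = false) ?addr0; last lia.
by rewrite -[X in _ = X -> _]addr0 => /addrI.
Qed.

Lemma comm_tijS w j p g : UT n w -> inrng n j.+1 -> inrng n p -> (p <= j)%N ->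
  (forall b : nat, w j.+1 b = (j.+1 == b)%:R) ->
  (forall a : nat, w a j = (a == j)%:R + (if a == p then g else 0)) ->
  comm n w (tij n j j.+1 1) = tij n p j.+1 g.
Proof.
move=> Uw nj1 np le_pj rowj1 colj.
have nj : inrng n j by apply: (inrng_between np nj1); lia.
have ltjS := ltnSn j.
have Ut : UT n (tij n j j.+1 (1 : F)) by apply: UT_tij.
have Utp : UT n (tij n p j.+1 g) by apply: UT_tij => //; lia.
have Utw : UT n (mxmul n (tij n j j.+1 1) w) by apply: UT_mxmul.
rewrite commE //; apply: mxext => a b.
rewrite mxmul_tijr // mxmulA mxmul_tijl // !mxmul_tijl //; try lia.
rewrite (_ : (j.+1 == j) = false) ?addr0; last lia.
rewrite colj !rowj1 !mul1r [j.+1 == b]eq_sym.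
by case: (b == j.+1); case: (a == j); case: (a == p); rewrite /= ?mulr0 ?mulr1 ?addr0 ?add0r //; ring.
Qed.

Lemma foldr_tij_col c (al : nat -> F) s : forall a, inrng n c -> (0 < a)%N -> (a + s <= c)%N ->
  let P := foldr (fun i acc => mxmul n (tij n i c (al i)) acc) (idm n) (iota a s) in
  UT n P /\ forall i j, P i j = idm n i j + (if (a <= i < a + s)%N && (j == c) then al i else 0).
Proof.
elim: s => [|s IH] a nc a_gt0 le_asc /=.
  by split=> [|i j]; [exact: UT_idm | rewrite (_ : (a <= i < a + 0)%N = false) ?addr0 //; lia].
have [UP PE] := IH a.+1 nc isT (ltac:(lia)).
have na : inrng n a by apply: (inrng_leq nc); lia.
split=> [|i j]; first by apply: UT_mxmul => //; apply: UT_tij => //; lia.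
rewrite mxmul_tijl //; last lia.
rewrite !PE (idm_rowE _ nc) (_ : (a.+1 <= c < a.+1 + s)%N = false) /= ?addr0; last lia.
case: (eqVneq i a) => [->|i_neq_a].
  rewrite ltnn /= addr0 leqnn (_ : (a < a + s.+1)%N) /=; last lia.
  by rewrite [c == j]eq_sym; case: (j == c); rewrite ?mulr1 ?mulr0.
rewrite addr0 (_ : (a < i < a.+1 + s)%N = (a <= i < a + s.+1)%N) //.
by apply/idP/idP => /andP [? ?]; apply/andP; split; lia.
Qed.

End Unitriangular.

Definition corner (n : dimN) (a b : nat) : bool :=
  (a == 1%N) && (if n is Some m then b == m else false).

Lemma inrng_row1S (n : dimN) b : inrng n b -> ~~ corner n 1%N b -> inrng n b.+1.
Proof. by rewrite /inrng /corner; case: n => [m|] /=; lia. Qed.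

Lemma UT_rowlast (F : fieldType) m (x : rmx F) b :
  UT (Some m) x -> (0 < m)%N -> x m b = (m == b)%:R.
Proof.
move=> Ux m_gt0; case: (eqVneq m b) => [<-|m_neq_b].
  by rewrite (UT_diag Ux) //= /inrng m_gt0 leqnn.
rewrite (UT_zero Ux) //; apply/negP => /and3P [_ nb le_mb].
by move: nb m_neq_b le_mb; rewrite /inrng => /andP [_ ?] /eqP; lia.
Qed.

Lemma eq_offcorner_mxmul_center (F : fieldType) (n : dimN) (y z : rmx F) :
  UT n y -> UT n z -> (if n is Some m then (1 < m)%N else true) ->
  (forall a b, ~~ corner n a b -> z a b = y a b) ->
  exists2 c, in_center n c & z = mxmul n y c.
Proof.
case: n => [m|] Uy Uz m_gt1 eq_yz; last first.
  exists (idm None); first by split=> [|x Ux]; [exact: UT_idm | rewrite idm_mxmul // mxmul_idm].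
  by rewrite mxmul_idm //; apply: mxext => a b; rewrite eq_yz // /corner andbF.
have n1 : inrng (Some m) 1%N by rewrite /inrng /=; lia.
have nm : inrng (Some m) m by rewrite /inrng /=; lia.
exists (tij (Some m) 1%N m (z 1%N m - y 1%N m)).
  split=> [|x Ux]; first exact: UT_tij.
  apply: mxext => a b; rewrite mxmul_tijl // mxmul_tijr // (UT_col1 _ Ux n1).
  rewrite (@UT_rowlast _ m x b Ux); last lia.
  by rewrite [m == b]eq_sym; case: (a == 1%N); case: (b == m); rewrite /= ?mulr0 ?mulr1.
apply: mxext => a b; rewrite mxmul_tijr // (UT_col1 _ Uy n1).
case: (eqVneq a 1%N) => [->|a_neq1]; case: (eqVneq b m) => [->|b_neq_m]; rewrite /= ?mulr1.
- by rewrite addrC subrK.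
- by rewrite addr0 eq_yz // /corner eqxx (negbTE b_neq_m).
- by rewrite mulr0 addr0 eq_yz // /corner (negbTE a_neq1).
- by rewrite addr0 eq_yz // /corner (negbTE a_neq1).
Qed.

Ltac case_ifs := rewrite ?mulrb /=; repeat case: ifP => ?; try done; try (exfalso; lia); try ring.

Section Ymat.

Variables (F : fieldType) (n : dimN) (k : nat) (be : F) (al : nat -> F).
Hypotheses (k_gt0 : (0 < k)%N) (n_large : if n is Some m then (k + 3 <= m)%N else true).

Local Notation y := (ymat n k be al).

Lemma inrng_upto i : (0 < i <= k + 3)%N -> inrng n i.
Proof. by move: n_large; rewrite /inrng; case: n => [m|] /=; rewrite ?andbT; lia. Qed.

Lemma ymat_factor_spec :
  let P := foldr (fun i acc => mxmul n (tij n i k (al i)) acc) (idm n) (iota 1 k.-1) in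
  UT n P /\ forall i j, P i j = idm n i j + (if (1 <= i < k)%N && (j == k) then al i else 0).
Proof.
have nk : inrng n k by apply: inrng_upto; lia.
have [UP PE] := @foldr_tij_col F n k al k.-1 1 nk isT (ltac:(lia)).
by split=> // i j; rewrite PE (_ : (1 + k.-1)%N = k) //; lia.
Qed.

Lemma UT_ymat : UT n y.
Proof.
have [UP _] := ymat_factor_spec.
by apply: UT_mxmul => //; apply: UT_tij; [apply: inrng_upto | apply: inrng_upto | ]; lia.
Qed.

Lemma ymatE i j : y i j = idm n i j + (if i == k.+1 then be * idm n k.+2 j else 0)
                               + (if (1 <= i < k)%N && (j == k) then al i else 0).
Proof.
have [UP PE] := ymat_factor_spec.
rewrite /ymat mxmul_tijl //; try (apply: inrng_upto; lia).
rewrite !PE (_ : (1 <= k.+2 < k)%N = false) /= ?addr0; last lia.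
by rewrite -!addrA [X in _ + X = _]addrC.
Qed.

Definition ymat_pivot i := if (i < k)%N then k else k.+2.
Definition ymat_coef i := if (i < k)%N then al i else if i == k.+1 then be else 0.

Lemma inrng_pivot i : inrng n (ymat_pivot i).
Proof. by rewrite /ymat_pivot; case: ifP => _; apply: inrng_upto; lia. Qed.

Lemma pivot_gt1 i : (1 < i)%N -> (1 < ymat_pivot i)%N.
Proof. by rewrite /ymat_pivot; case: ifP; lia. Qed.

Lemma coef_pivot i : ymat_coef (ymat_pivot i) = 0.
Proof. by rewrite /ymat_coef /ymat_pivot; case: (i < k)%N; rewrite !ifF //; lia. Qed.

Lemma ymat_row i b : (1 < i)%N -> inrng n i ->
  y i b = (i == b)%:R + ymat_coef i * y (ymat_pivot i) b.
Proof.
move=> lt1i ni; have np := inrng_pivot i.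
rewrite !ymatE !idm_rowE //; try (apply: inrng_upto; lia).
by rewrite /ymat_coef /ymat_pivot; case_ifs.
Qed.

Lemma ymat_comm_t1 i : (1 < i)%N -> inrng n i ->
  comm n (tij n 1%N i 1) y = tij n 1%N (ymat_pivot i) (ymat_coef i).
Proof.
move=> lt1i ni; apply/comm_t1_rowE => //.
- exact: UT_ymat.
- exact: inrng_pivot.
- exact: pivot_gt1.
- by move=> b; apply: ymat_row.
Qed.

Lemma ymat_comm_tijS j : (k < j)%N -> inrng n j.+1 ->
  comm n y (tij n j j.+1 1) = tij n k.+1 j.+1 (if j == k.+2 then be else 0).
Proof.
move=> lt_kj nj1; have nj : inrng n j by apply: (inrng_leq nj1); lia.
have nk2 : inrng n k.+2 by apply: inrng_upto; lia.
apply: comm_tijS => //; [exact: UT_ymat | apply: inrng_upto; lia | |].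
- by move=> b; rewrite ymatE !idm_rowE //; case_ifs.
- by move=> a; rewrite ymatE !idm_colE //; case_ifs.
Qed.

Section PCimage.

Variable phi : rmx F -> rmx F.
Hypotheses (PC_phi : PCmap n phi) (phi_tij : almost_identity n phi).

Lemma UT_phi_ymat : UT n (phi y).
Proof. by case: PC_phi => UT_phi _ _ _; apply/UT_phi/UT_ymat. Qed.

Lemma phi_ymat_row i b : (1 < i)%N -> inrng n i ->
  phi y i b = (i == b)%:R + ymat_coef i * phi y (ymat_pivot i) b.
Proof.
case: PC_phi => _ _ _ phi_comm lt1i ni.
have n1 : inrng n 1%N by apply: (inrng_leq ni); lia.
have [np lt1p] := (inrng_pivot i, pivot_gt1 lt1i).
move: b; apply/(comm_t1_rowE (ymat_coef i) UT_phi_ymat ni np lt1i lt1p).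
have -> : comm n (tij n 1%N i 1) (phi y) = phi (comm n (tij n 1%N i 1) y).
  by rewrite phi_comm ?phi_tij //; [apply: UT_tij | exact: UT_ymat].
by rewrite ymat_comm_t1 // phi_tij.
Qed.

Lemma phi_ymat_row1 j : (k < j)%N -> inrng n j.+1 -> phi y 1%N j = 0.
Proof.
case: PC_phi => _ _ _ phi_comm lt_kj nj1.
have nj : inrng n j by apply: (inrng_leq nj1); lia.
have nk1 : inrng n k.+1 by apply: inrng_upto; lia.
have lt1k1j : (1 < k.+1 <= j)%N by lia.
apply: (comm_tijS_row1 UT_phi_ymat nj1 nk1 lt1k1j).
have -> : comm n (phi y) (tij n j j.+1 1) = phi (comm n y (tij n j j.+1 1)).
  by rewrite phi_comm ?phi_tij //; [exact: UT_ymat | apply: UT_tij].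
by rewrite ymat_comm_tijS // phi_tij //; lia.
Qed.

Lemma phi_ymat_offcorner : condX n phi k -> forall a b, ~~ corner n a b -> phi y a b = y a b.
Proof.
move=> HX a b not_corner; have [Uz Uy] := (UT_phi_ymat, UT_ymat).
case na: (inrng n a); last by rewrite (UT_zero Uz) ?(UT_zero Uy) ?na.
case: (ltnP 1 a) => [lt1a | le_a1].
  have [np lt1p] := (inrng_pivot a, pivot_gt1 lt1a).
  by rewrite phi_ymat_row // ymat_row // phi_ymat_row // ymat_row // coef_pivot !mul0r !addr0.
have a1 : a = 1%N by move: na => /andP [? _]; lia.
rewrite {a le_a1}a1 in na not_corner *.
case nb: (inrng n b); last by rewrite (UT_zero Uz) ?(UT_zero Uy) ?nb ?andbF.
case: (ltnP k b) => [lt_kb | le_bk].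
  have n1 := na; rewrite phi_ymat_row1 ?inrng_row1S // ymatE idm_rowE //.
  by case_ifs.
case: (ltnP 1 b) => [lt1b | le_b1]; first by apply: HX => //; lia.
have -> : b = 1%N by move: nb => /andP [? _]; lia.
by rewrite (UT_diag Uz) ?(UT_diag Uy).
Qed.

End PCimage.

End Ymat.

Theorem mainTheorem2 (F : fieldType) (n : dimN) (phi : rmx F -> rmx F) (k : nat) :
  PCmap n phi -> almost_identity n phi ->
  (0 < k)%N -> (if n is Some m then (k + 3 <= m)%N else true) ->
  condX n phi k -> condY n phi k.
Proof.
move=> PC_phi phi_tij k_gt0 n_large HX be al.
apply: eq_offcorner_mxmul_center.
- exact: UT_ymat.
- exact: UT_phi_ymat.
- by move: n_large; case: (n) => [m|] //; lia.
- exact: phi_ymat_offcorner.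
Qed.
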